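(* For every integer $r\geq 3$ there exist an $r$-connected $r$-regular graph $G$ of even order and a set $\mathcal O$ of pairwise vertex-disjoint odd cycles of $G$ with the following property: if $t$ is a positive integer and $F$ is a $t$-factor of $G$ with $E(F) \cap E(O) \neq \emptyset$ for every $O \in \mathcal{O}$, then $t \geq \frac{r}{3}$.
   Context: Graphs are finite and loopless. A cycle is a connected $2$-regular subgraph; it is odd if it has an odd number of edges. A $t$-factor of $G$ is a spanning $t$-regular subgraph. $r$-connected means $G$ has more than $r$ vertices and remains connected after deleting any fewer than $r$ vertices. *)

(* Simple graphs on a finite type V: a symmetric irreflexive
   relation e. Subgraphs are given by their edge sets, edges being 2-element
   vertex sets {x,y}. *)
From mathcomp Require Import all_boot.
Set Implicit Arguments. Unset Strict Implicit. Unset Printing Implicit Defensive.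

Section Graphs.
Variable V : finType.

Definition simple_graph (e : rel V) : Prop := symmetric e /\ irreflexive e.

Definition edges (e : rel V) : {set {set V}} :=
  [set E : {set V} | [exists x, exists y, e x y && (E == [set x; y])]].

Definition regular (e : rel V) (r : nat) : Prop :=
  forall v : V, #|[set w | e v w]| = r.

Definition connected_minus (e : rel V) (S : {set V}) : Prop :=
  forall x y, x \notin S -> y \notin S ->
    connect [rel a b | e a b && (a \notin S) && (b \notin S)] x y.

Definition r_connected (e : rel V) (r : nat) : Prop :=
  r < #|V| /\ forall S : {set V}, #|S| < r -> connected_minus e S.

Definition sdeg (D : {set {set V}}) (v : V) : nat := #|[set E in D | v \in E]|.

(* D is the edge set of a cycle of G: a connected 2-regular subgraph
   (vertex set = cover D, since a cycle has no isolated vertices) *)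
Definition is_cycle (e : rel V) (D : {set {set V}}) : Prop :=
  [/\ D \subset edges e, D != set0,
      forall v, v \in cover D -> sdeg D v = 2
    & forall x y, x \in cover D -> y \in cover D ->
        connect [rel a b | [set a; b] \in D] x y].

Definition is_odd_cycle (e : rel V) (D : {set {set V}}) : Prop :=
  is_cycle e D /\ odd #|D|.

Definition is_factor (e : rel V) (t : nat) (F : {set {set V}}) : Prop :=
  F \subset edges e /\ forall v : V, sdeg F v = t.

End Graphs.

From mathcomp Require Import all_boot zify.
Set Implicit Arguments. Unset Strict Implicit. Unset Printing Implicit Defensive.

(* Write r = s + 2.  Take s + 2 disjoint triangles with vertices coloured 0, 1, 2, and
   for each colour j an independent set B_j of s vertices, each joined to the
   colour-j vertex of every triangle.  The triangle vertices A cover all edges and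
   B = B_0 + B_1 + B_2 is independent, so summing the degrees of a t-factor F over A
   and over B gives 3(s+2)t = 3st + 2 e_F(A), i.e. e_F(A) = 3t.  If F meets each of
   the s + 2 triangles, e_F(A) >= s + 2 = r.  For r-connectivity, a set of fewer than
   r vertices misses some whole triangle, and every other surviving vertex reaches it. *)

Lemma connect_homo (T U : finType) (e1 : rel T) (e2 : rel U) (h : T -> U) x y :
  (forall a b, e1 a b -> e2 (h a) (h b)) -> connect e1 x y -> connect e2 (h x) (h y).
Proof.
move=> he /connectP [p]; elim: p x => [|z p IHp] x /=; first by move=> _ ->.
by case/andP=> exz pz yE; apply: connect_trans (connect1 (he _ _ exz)) (IHp _ pz yE).
Qed.

Lemma exists_notin (T : finType) (A : {set T}) : #|A| < #|T| -> exists x, x \notin A.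
Proof.
move=> A_small; have : 0 < #|~: A| by move: A_small; rewrite -(cardsC A); lia.
by case/card_gt0P=> x; rewrite inE; exists x.
Qed.

Lemma card_sum_set (A B : finType) (P : pred (A + B)) :
  #|[set w | P w]| = #|[set a | P (inl a)]| + #|[set b | P (inr b)]|.
Proof.
by rewrite -!sum1_card big_sumType; congr (_ + _); apply: eq_bigl => x; rewrite !inE.
Qed.

Section Relabel.
Variables (T U : finType) (h : T -> U).
Hypothesis h_inj : injective h.

Definition relabel (D : {set {set T}}) : {set {set U}} := [set h @: E | E : {set T} in D].

Lemma mem_relabel D (E : {set T}) : (h @: E \in relabel D) = (E \in D).
Proof. by rewrite mem_imset //; apply: imset_inj. Qed.

Lemma card_relabel D : #|relabel D| = #|D|.
Proof. by rewrite card_imset //; apply: imset_inj. Qed.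

Lemma cover_relabel D : cover (relabel D) = h @: cover D.
Proof.
apply/setP => x; apply/bigcupP/imsetP.
  case=> _ /imsetP [E ED ->] /imsetP [y yE ->].
  by exists y => //; apply/bigcupP; exists E.
case=> y /bigcupP [E ED yE] ->; exists (h @: E); first by rewrite mem_relabel.
exact: imset_f.
Qed.

Lemma sdeg_relabel D v : sdeg (relabel D) (h v) = sdeg D v.
Proof.
rewrite /sdeg -(card_relabel [set E in D | v \in E]); apply: eq_card.
move=> E'; rewrite !inE; apply/andP/imsetP.
  case=> /imsetP [E ED ->]; rewrite mem_imset // => vE.
  by exists E; rewrite ?inE ?ED.
by case=> E /[!inE] /andP [ED vE] ->; rewrite mem_relabel mem_imset.
Qed.

Variables (e1 : rel T) (e2 : rel U).
Hypothesis h_homo : forall x y, e1 x y -> e2 (h x) (h y).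

Lemma relabel_edges (D : {set {set T}}) : D \subset edges e1 -> relabel D \subset edges e2.
Proof.
move=> /subsetP sDe; apply/subsetP => E' /imsetP [E /sDe].
rewrite !inE => /existsP [x /existsP [y /andP [exy /eqP ->]]] ->.
apply/existsP; exists (h x); apply/existsP; exists (h y).
by rewrite h_homo // imsetU1 imset_set1 eqxx.
Qed.

Lemma odd_cycle_relabel O : is_odd_cycle e1 O -> is_odd_cycle e2 (relabel O).
Proof.
case=> [[sOe O_nz Odeg Oconn] Oodd]; split; last by rewrite card_relabel.
split; first exact: relabel_edges.
- by rewrite -card_gt0 card_relabel card_gt0.
- by move=> u; rewrite cover_relabel => /imsetP [v vO ->]; rewrite sdeg_relabel Odeg.
move=> u w; rewrite cover_relabel => /imsetP [x xO ->] /imsetP [y yO ->].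
apply: connect_homo (Oconn _ _ xO yO) => a b /=.
by rewrite -mem_relabel imsetU1 imset_set1.
Qed.

End Relabel.

Definition cycle_factor_witness (T : finType) (e : rel T) (r : nat) : Prop :=
  [/\ simple_graph e, r_connected e r, regular e r, ~~ odd #|T| &
    exists Os : {set {set {set T}}},
      [/\ forall O, O \in Os -> is_odd_cycle e O,
          forall O1 O2, O1 \in Os -> O2 \in Os -> O1 != O2 ->
            [disjoint cover O1 & cover O2]
        & forall (t : nat) (F : {set {set T}}),
            0 < t -> is_factor e t F ->
            (forall O, O \in Os -> F :&: O != set0) ->
            r <= 3 * t]].

Section Isomorphic.
Variables (T U : finType) (h : T -> U) (g : U -> T).
Hypotheses (hK : cancel h g) (gK : cancel g h).
Variable e : rel T.

Let e' : rel U := [rel x y | e (g x) (g y)].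
Let h_inj : injective h := can_inj hK.
Let g_inj : injective g := can_inj gK.

Let h_homo x y : e x y -> e' (h x) (h y).
Proof. by rewrite /e' /= !hK. Qed.

Lemma card_iso : #|T| = #|U|.
Proof. by apply: (bij_eq_card (f := h)); exists g. Qed.

Lemma r_connected_iso r : r_connected e r -> r_connected e' r.
Proof.
case=> r_lt e_conn; split=> [|S S_small x y xS yS]; first by rewrite -card_iso.
have gS z : (g z \in g @: S) = (z \in S) by rewrite mem_imset.
have gS_small : #|g @: S| < r by apply: leq_ltn_trans (leq_imset_card _ _) S_small.
rewrite -(gK x) -(gK y); apply: connect_homo (e_conn _ gS_small _ _ _ _);
  rewrite ?gS // => a b /= /andP [/andP [eab aS] bS].
by rewrite /e' /= !hK eab -gS hK aS -gS hK bS.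
Qed.

Lemma regular_iso r : regular e r -> regular e' r.
Proof.
move=> e_reg v; rewrite -(e_reg (g v)) -(card_imset _ h_inj); apply: eq_card => w.
by rewrite inE -[in RHS](gK w) mem_imset // inE.
Qed.

Lemma cycle_factor_witness_iso r :
  cycle_factor_witness e r -> cycle_factor_witness e' r.
Proof.
case=> [[e_sym e_irr] e_conn e_reg n_even [Os [Os_cycle Os_disj Os_bound]]].
split; first by split=> [x y | x]; [exact: e_sym | exact: e_irr].
- exact: r_connected_iso.
- exact: regular_iso.
- by rewrite -card_iso.
exists [set relabel h O | O in Os]; split.
- move=> _ /imsetP [O OOs ->]; exact (odd_cycle_relabel h_inj h_homo (Os_cycle O OOs)).
- move=> _ _ /imsetP [O1 O1s ->] /imsetP [O2 O2s ->] O12.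
  rewrite !cover_relabel // imset_disjoint // Os_disj //.
  by apply: contraNneq O12 => ->.
move=> t F t_gt0 [sFe F_deg] F_hits; apply: (Os_bound t (relabel g F) t_gt0).
  by split=> [|v]; [apply: relabel_edges sFe | rewrite -[v]hK sdeg_relabel].
move=> O OOs; case/set0Pn: (F_hits _ (imset_f _ OOs)) => E' /setIP [E'F /imsetP [E EO E'E]].
apply/set0Pn; exists E; rewrite inE EO andbT.
suff -> : E = g @: E' by rewrite mem_relabel.
by rewrite E'E -imset_comp (eq_imset _ hK) imset_id.
Qed.

End Isomorphic.

Section Triangle.
Variables (V : finType) (e : rel V) (K : {set V}).
Hypotheses (K3 : #|K| = 3) (K_clique : {in K &, forall x y, x != y -> e x y}).

Definition triangle : {set {set V}} := [set K :\ x | x in K].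

Let card_K_minus x : x \in K -> #|K :\ x| = 2.
Proof. by move=> xK; move: K3; rewrite (cardsD1 x) xK => -[]. Qed.

Let K_minus_inj : {in K &, injective (fun x => K :\ x)}.
Proof.
move=> x y _ yK Kxy; apply/eqP; apply: contraT => xy.
by have := setD11 y K; rewrite -Kxy !inE eq_sym xy yK.
Qed.

Lemma triangle_sub_K E : E \in triangle -> E \subset K.
Proof. by case/imsetP=> x _ ->; apply: subD1set. Qed.

Lemma card_triangle_edge E : E \in triangle -> #|E| = 2.
Proof. by case/imsetP=> x xK ->; apply: card_K_minus. Qed.

Lemma pair_in_triangle x y : x \in K -> y \in K -> x != y -> [set x; y] \in triangle.
Proof.
move=> xK yK xy; have : 0 < #|K :\ x :\ y|.
  by move: (card_K_minus xK); rewrite (cardsD1 y) !inE eq_sym xy yK add1n => -[->].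
case/card_gt0P=> z /setD1P [zy /setD1P [zx zK]].
suff -> : [set x; y] = K :\ z by apply: imset_f.
apply/eqP; rewrite eqEcard card_K_minus // cards2 xy andbT subUset !sub1set.
by rewrite !inE xK yK eq_sym zx eq_sym zy.
Qed.

Lemma cover_triangle : cover triangle = K.
Proof.
apply/eqP; rewrite eqEsubset; apply/andP; split.
  by apply/bigcupsP => E /triangle_sub_K.
apply/subsetP => v vK; have : 0 < #|K :\ v| by rewrite card_K_minus.
case/card_gt0P=> x /setD1P [xv xK]; apply/bigcupP; exists [set v; x]; last exact: set21.
by rewrite pair_in_triangle // eq_sym.
Qed.

Lemma sdeg_triangle v : v \in K -> sdeg triangle v = 2.
Proof.
move=> vK; rewrite /sdeg -(card_K_minus vK).
have K_minus_v_inj : {in K :\ v &, injective (fun x => K :\ x)}.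
  by move=> x y /setD1P [_ xK] /setD1P [_ yK]; apply: K_minus_inj.
rewrite -(card_in_imset K_minus_v_inj); apply: eq_card => E; rewrite !inE.
apply/andP/imsetP => [[/imsetP [x xK ->]] | [x /setD1P [xv xK] ->]].
  by rewrite !inE => /andP [vx _]; exists x; rewrite // !inE eq_sym vx.
by split; [apply: imset_f | rewrite !inE eq_sym xv].
Qed.

Lemma triangle_odd_cycle : is_odd_cycle e triangle.
Proof.
split; last by rewrite card_in_imset // K3.
split; rewrite ?cover_triangle.
- apply/subsetP => E /imsetP [z zK ->].
  have /cards2P [x [y [xy Exy]]] : #|K :\ z| == 2 by rewrite card_K_minus.
  have /setD1P [_ xK] : x \in K :\ z by rewrite Exy set21.
  have /setD1P [_ yK] : y \in K :\ z by rewrite Exy set22.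
  rewrite inE; apply/existsP; exists x; apply/existsP; exists y.
  by rewrite (K_clique xK yK xy); apply/eqP.
- by rewrite -cards_eq0 card_in_imset // K3.
- exact: sdeg_triangle.
move=> x y xK yK; have [<- | xy] := eqVneq x y; first exact: connect0.
by apply: connect1; apply: pair_in_triangle.
Qed.

End Triangle.

Lemma card_set_sum (T : finType) (A : {pred T}) (P : pred T) :
  #|[set x in A | P x]| = \sum_(x in A) P x.
Proof.
rewrite -sum1_card big_mkcond [RHS]big_mkcond /=.
by apply: eq_bigr => x _; rewrite inE; case: (x \in A); case: (P x).
Qed.

Lemma sum_sdeg (V : finType) (F : {set {set V}}) (A : {set V}) :
  \sum_(v in A) sdeg F v = \sum_(E in F) #|E :&: A|.
Proof.
under eq_bigr do rewrite /sdeg card_set_sum.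
rewrite exchange_big; apply: eq_bigr => E _.
by rewrite -card_set_sum; apply: eq_card => v; rewrite !inE andbC.
Qed.

Section EdgeCount.
Variables (V : finType) (e : rel V) (A : {set V}).
Hypothesis e_irr : irreflexive e.
Hypothesis A_vertex_cover : forall x y, e x y -> (x \in A) || (y \in A).

Lemma card_edgeI E : E \in edges e -> #|E :&: A| = #|E :\: A| + 2 * (E \subset A).
Proof.
rewrite inE => /existsP [x /existsP [y /andP [exy /eqP E_xy]]].
have xy : x != y by apply: contraTneq exy => ->; rewrite e_irr.
have := cardsID A E; rewrite E_xy cards2 xy -E_xy -setD_eq0 -cards_eq0.
have : 0 < #|E :&: A|.
  apply/card_gt0P; case/orP: (A_vertex_cover exy) => [xA | yA];
  by [exists x; rewrite E_xy !inE eqxx xA | exists y; rewrite E_xy !inE eqxx yA orbT].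
by case: #|E :\: A| => [|[|b]] /=; lia.
Qed.

Lemma sum_sdeg_vertex_cover (F : {set {set V}}) : F \subset edges e ->
  \sum_(v in A) sdeg F v = \sum_(v in ~: A) sdeg F v + 2 * #|[set E in F | E \subset A]|.
Proof.
move=> /subsetP sFe; rewrite !sum_sdeg card_set_sum big_distrr -big_split /=.
by apply: eq_bigr => E EF; rewrite card_edgeI ?sFe // -setDE.
Qed.

End EdgeCount.

Lemma card_hitting (T I : finType) (O : I -> {set T}) (F : {set T}) :
  (forall i j, i != j -> [disjoint O i & O j]) -> (forall i, F :&: O i != set0) ->
  #|I| <= #|F :&: \bigcup_i O i|.
Proof.
move=> O_disj F_hits.
have /fin_all_exists [f fP] i : exists x, x \in F :&: O i by apply/set0Pn.
have f_inj : injective f.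
  move=> i j fij; apply/eqP/negPn/negP => ij.
  have /setIP [_ fi] := fP i; have /setIP [_ fj] := fP j.
  by rewrite -fij (disjointFr (O_disj _ _ ij) fi) in fj.
rewrite -cardsT -(card_imset setT f_inj); apply/subset_leq_card/subsetP => _ /imsetP [i _ ->].
by have /setIP [fF fO] := fP i; rewrite inE fF; apply/bigcupP; exists i.
Qed.

Section Construction.
Variable s : nat.
Hypothesis s_gt0 : 0 < s.

(* [inl (j, i)] is the vertex of colour [j] of the [i]-th triangle; [inr (j, q)] is
   joined to the colour-[j] vertices of all [s.+2] triangles. *)
Definition vertex := (('I_3 * 'I_s.+2) + ('I_3 * 'I_s))%type.

Definition adj : rel vertex := fun x y =>
  match x, y with
  | inl a, inl b => (a.2 == b.2) && (a.1 != b.1)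
  | inl a, inr b => a.1 == b.1
  | inr a, inl b => a.1 == b.1
  | inr _, inr _ => false
  end.

Definition colour (v : vertex) : 'I_3 := match v with inl a => a.1 | inr b => b.1 end.

Definition triangle_part : {set vertex} := [set v | if v is inl _ then true else false].

Definition tri (i : 'I_s.+2) : {set vertex} := [set inl (j, i) | j : 'I_3].

Lemma adj_sym : symmetric adj.
Proof. by case=> [[j i]|[j i]] [[k l]|[k l]] //=; rewrite eq_sym // [k == j]eq_sym. Qed.

Lemma adj_irr : irreflexive adj.
Proof. by case=> [[j i]|[j i]] /=; rewrite ?eqxx ?andbF. Qed.

Lemma adj_regular : regular adj s.+2.
Proof.
case=> [[j i]|[j q]]; rewrite card_sum_set /=.
- have -> : [set a : 'I_3 * 'I_s.+2 | (i == a.2) && (j != a.1)] = setX [set~ j] [set i].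
    by apply/setP => -[j' i']; rewrite !inE /= eq_sym [j' == j]eq_sym andbC.
  have -> : [set b : 'I_3 * 'I_s | j == b.1] = setX [set j] setT.
    by apply/setP => -[j' i']; rewrite !inE /= eq_sym andbT.
  by rewrite !cardsX cardsC1 !cards1 cardsT !card_ord muln1 mul1n.
- have -> : [set a : 'I_3 * 'I_s.+2 | j == a.1] = setX [set j] setT.
    by apply/setP => -[j' i']; rewrite !inE /= eq_sym andbT.
  have -> : [set b : 'I_3 * 'I_s | false] = set0 by apply/setP => b; rewrite !inE.
  by rewrite cardsX cards1 cardsT card_ord cards0 mul1n addn0.
Qed.

Lemma card_vertex : #|{: vertex}| = 6 * s.+1.
Proof. by rewrite card_sum !card_prod !card_ord; lia. Qed.

Lemma card_triangle_part : #|triangle_part| = 3 * s.+2.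
Proof. by rewrite card_sum_set /= cardsT card_prod !card_ord cards0 addn0. Qed.

Lemma card_tri i : #|tri i| = 3.
Proof. by rewrite card_imset ?card_ord // => j j' [->]. Qed.

Lemma tri_clique i : {in tri i &, forall x y, x != y -> adj x y}.
Proof.
move=> _ _ /imsetP [j _ ->] /imsetP [j' _ ->] jj' /=.
by rewrite eqxx; apply: contraNneq jj' => ->.
Qed.

Lemma tri_sub_triangle_part i : tri i \subset triangle_part.
Proof. by apply/subsetP => _ /imsetP [j _ ->]; rewrite inE. Qed.

Lemma tri_disjoint i i' : i != i' -> [disjoint tri i & tri i'].
Proof.
move=> ii'; rewrite -setI_eq0; apply/eqP/setP => x; rewrite !inE.
apply/negP => /andP [/imsetP [j _ ->] /imsetP [j' _ [_ i_eq]]].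
by rewrite i_eq eqxx in ii'.
Qed.

Lemma tri_edges_disjoint i i' :
  i != i' -> [disjoint triangle (tri i) & triangle (tri i')].
Proof.
move=> ii'; rewrite -setI_eq0; apply/eqP/setP => E; rewrite !inE.
apply/negP => /andP [Ei Ei'].
have /card_gt0P [x xE] : 0 < #|E| by rewrite (card_triangle_edge (card_tri i) Ei).
have xi := subsetP (triangle_sub_K Ei) x xE; have xi' := subsetP (triangle_sub_K Ei') x xE.
by rewrite (disjointFr (tri_disjoint ii') xi) in xi'.
Qed.

Lemma factor_hitting_triangles t F : is_factor adj t F ->
  (forall i, F :&: triangle (tri i) != set0) -> s.+2 <= 3 * t.
Proof.
case=> sFe F_deg F_hits.
have part_cover x y : adj x y -> (x \in triangle_part) || (y \in triangle_part).
  by case: x => [a|a]; case: y => [b|b]; rewrite !inE.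
have := sum_sdeg_vertex_cover adj_irr part_cover sFe.
rewrite !(eq_bigr _ (fun v _ => F_deg v)) !sum_nat_const card_triangle_part.
have -> : #|~: triangle_part| = 3 * s.
  by apply/eqP; rewrite -(eqn_add2l (3 * s.+2)) -{1}card_triangle_part cardsC card_vertex; lia.
have : s.+2 <= #|[set E in F | E \subset triangle_part]|.
  have := card_hitting tri_edges_disjoint F_hits; rewrite card_ord => /leq_trans; apply.
  apply/subset_leq_card/subsetP => E /setIP [EF /bigcupP [i _ Ei]].
  by rewrite inE EF (subset_trans (triangle_sub_K Ei) (tri_sub_triangle_part i)).
set X := #|_|; rewrite -!mulnA; lia.
Qed.

Definition column (v : vertex) : 'I_s.+2 := if v is inl a then a.2 else ord0.

Section Connectivity.
Variable S : {set vertex}.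
Hypothesis S_small : #|S| < s.+2.

Let R := [rel x y | adj x y && (x \notin S) && (y \notin S)].

Lemma free_column : exists i0, forall j, inl (j, i0) \notin S.
Proof.
have [i0 i0_free] : exists i0, i0 \notin column @: S.
  by apply: exists_notin; rewrite card_ord; apply: leq_ltn_trans (leq_imset_card _ _) _.
by exists i0 => j; apply: contra i0_free => jS; apply/imsetP; exists (inl (j, i0)).
Qed.

Lemma free_colour j : (forall q, inr (j, q) \in S) ->
  exists2 j', j' != j & forall v, colour v = j' -> v \notin S.
Proof.
move=> Bj_in_S; pose Bj : {set vertex} := [set inr (j, q) | q : 'I_s].
have sBjS : Bj \subset S by apply/subsetP => _ /imsetP [q _ ->].
have card_Bj : #|Bj| = s by rewrite card_imset ?card_ord // => q q' [->].
have card_rest : #|S :\: Bj| <= 1.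
  by rewrite cardsD (setIidPr sBjS) card_Bj; lia.
have [j' j'_free] : exists j', j' \notin j |: colour @: (S :\: Bj).
  apply: exists_notin; rewrite card_ord cardsU1.
  have := leq_trans (leq_imset_card colour (S :\: Bj)) card_rest.
  by case: (_ \notin _) => /=; lia.
move: j'_free; rewrite !inE negb_or => /andP [j'j j'_rest].
exists j' => // v vj'; apply: contra j'_rest => vS; rewrite -vj'.
apply: imset_f; rewrite inE vS andbT; apply: contraNN j'j => /imsetP [q _ vq].
by rewrite -vj' vq.
Qed.

Variable i0 : 'I_s.+2.
Hypothesis i0_free : forall j, inl (j, i0) \notin S.

Let hub : vertex := inl (ord0, i0).

Let connect_column j : connect R (inl (j, i0)) hub.
Proof.
have [-> | j0] := eqVneq j ord0; first exact: connect0.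
by apply: connect1; rewrite /= eqxx j0 !i0_free.
Qed.

Let connect_inr j q : inr (j, q) \notin S -> connect R (inr (j, q)) hub.
Proof.
move=> qS; apply: connect_trans (connect_column j).
by apply: connect1; rewrite /= eqxx qS i0_free.
Qed.

Let connect_inl j i : inl (j, i) \notin S -> connect R (inl (j, i)) hub.
Proof.
move=> iS; case: (pickP (fun q => inr (j, q) \notin S)) => [q qS | Bj_in_S].
  by apply: connect_trans (connect_inr qS); apply: connect1; rewrite /= eqxx iS qS.
have [j' j'j j'_free] := free_colour (fun q => negbFE (Bj_in_S q)).
pose q0 : 'I_s := Ordinal s_gt0.
have [j'iS j'q0S] : inl (j', i) \notin S /\ inr (j', q0) \notin S by split; apply: j'_free.
have to_j' : R (inl (j, i)) (inl (j', i)) by rewrite /= eqxx eq_sym j'j iS j'iS.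
have to_q0 : R (inl (j', i)) (inr (j', q0)) by rewrite /= eqxx j'iS j'q0S.
apply: connect_trans (@connect1 _ R _ _ to_j') _.
exact: connect_trans (@connect1 _ R _ _ to_q0) (connect_inr j'q0S).
Qed.

Lemma connect_hub v : v \notin S -> connect R v hub.
Proof. by case: v => [[j i] | [j q]]; [apply: connect_inl | apply: connect_inr]. Qed.

End Connectivity.

Lemma adj_r_connected : r_connected adj s.+2.
Proof.
split=> [|S S_small x y xS yS]; first by rewrite card_vertex; lia.
have [i0 i0_free] := free_column S_small.
have R_sym : symmetric [rel x y | adj x y && (x \notin S) && (y \notin S)].
  by move=> a b /=; rewrite adj_sym -!andbA [(a \notin S) && _]andbC.
apply: connect_trans (connect_hub S_small i0_free xS) _.
by rewrite (sym_connect_sym R_sym) (connect_hub S_small i0_free yS).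
Qed.

Lemma adj_witness : cycle_factor_witness adj s.+2.
Proof.
split.
- by split; [exact: adj_sym | exact: adj_irr].
- exact: adj_r_connected.
- exact: adj_regular.
- by rewrite card_vertex oddM.
exists [set triangle (tri i) | i : 'I_s.+2]; split.
- by move=> _ /imsetP [i _ ->]; apply: triangle_odd_cycle (card_tri i) (@tri_clique i).
- move=> _ _ /imsetP [i _ ->] /imsetP [i' _ ->] ii'.
  rewrite !cover_triangle ?card_tri //; apply: tri_disjoint.
  by apply: contraNneq ii' => ->.
move=> t F _ F_factor F_hits; apply: factor_hitting_triangles F_factor _ => i.
exact/F_hits/imset_f.
Qed.

End Construction.

Theorem theorem3p1 :
  forall r : nat, 3 <= r ->
  exists (n : nat) (e : rel 'I_n),
    [/\ simple_graph e, r_connected e r, regular e r, ~~ odd n &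
    exists Os : {set {set {set 'I_n}}},
      [/\ forall O, O \in Os -> is_odd_cycle e O,
          forall O1 O2, O1 \in Os -> O2 \in Os -> O1 != O2 ->
            [disjoint cover O1 & cover O2]
        & forall (t : nat) (F : {set {set 'I_n}}),
            0 < t -> is_factor e t F ->
            (forall O, O \in Os -> F :&: O != set0) ->
            r <= 3 * t]].
Proof.
case=> [|[|[|s]]] // _.
have := cycle_factor_witness_iso (@enum_rankK _) (@enum_valK _) (adj_witness (ltn0Sn s)).
case=> e_simple e_conn e_reg n_even e_cycles.
exists #|{: vertex s.+1}|, [rel x y | adj (enum_val x) (enum_val y)].
by split=> //; rewrite card_ord in n_even.
Qed.
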